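(* Let $B=\bigoplus_{i\in\mathbb{Z}}B_i$ be a $\mathbb{Z}$-graded integral domain with $e(B)=1$. (a) If $S\subseteq\mathbb{Z}\setminus\{0\}$ is such that no height-$1$ prime ideal of $B$ contains $\bigcup_{i\in S}B_i$, then every element of $\Pi(B)$ is a prime factor of some element of $S$. (b) If no height-$1$ prime ideal of $B$ contains $\bigcup_{i\in\mathbb{Z}\setminus\{0\}}B_i$ and $B$ is noetherian, then $\Pi(B)$ is finite. (c) If some height-$1$ prime ideal of $B$ contains $\bigcup_{i\in\mathbb{Z}\setminus\{0\}}B_i$, then $\Pi(B)$ is the set of all prime numbers and $\Pi^*(B)=\{1\}$.
   Context: For a $\mathbb{Z}$-graded domain $C$, $e(C)=\gcd\{i\in\mathbb{Z}:C_i\neq0\}$. $\Pi(B)$ is the set of primes $p$ with $p\mid e(B/\mathfrak{p})$ for some homogeneous height-$1$ prime ideal $\mathfrak{p}$ of $B$; $\Pi^*(B)$ is the set of positive integers not divisible by any element of $\Pi(B)$. *)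

From HB Require Import structures.
From mathcomp Require Import all_boot all_order all_algebra.
Set Implicit Arguments. Unset Strict Implicit. Unset Printing Implicit Defensive.
Import Order.TTheory GRing.Theory Num.Theory.
Local Open Scope ring_scope.

(* A Z-grading B = (+)_{i in Z} B_i of a commutative ring B: the component
   B_i is given by the predicate [gcomp i]. *)
Record grading (B : comNzRingType) := Grading {
  gcomp : int -> B -> Prop;
  gcomp0 : forall i, gcomp i 0;
  gcompB : forall i x y, gcomp i x -> gcomp i y -> gcomp i (x - y);
  gcompM : forall i j x y, gcomp i x -> gcomp j y -> gcomp (i + j) (x * y);
  gcomp_span : forall x : B, exists (s : seq int) (f : int -> B),
      (forall i, gcomp i (f i)) /\ x = \sum_(i <- s) f i;
  gcomp_direct : forall (s : seq int) (f : int -> B), uniq s ->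
      (forall i, gcomp i (f i)) -> \sum_(i <- s) f i = 0 ->
      forall i, i \in s -> f i = 0
}.

Definition is_ideal (B : comNzRingType) (I : B -> Prop) : Prop :=
  I 0 /\ (forall x y, I x -> I y -> I (x - y)) /\ (forall a x, I x -> I (a * x)).

Definition is_prime_ideal (B : comNzRingType) (P : B -> Prop) : Prop :=
  is_ideal P /\ ~ P 1 /\ (forall x y, P (x * y) -> P x \/ P y).

Definition strict_subset (B : Type) (P Q : B -> Prop) : Prop :=
  (forall x, P x -> Q x) /\ exists x, Q x /\ ~ P x.

Definition is_height_one_prime (B : comNzRingType) (P : B -> Prop) : Prop :=
  is_prime_ideal P /\
  (exists Q, is_prime_ideal Q /\ strict_subset Q P) /\
  ~ (exists Q1 Q2, is_prime_ideal Q1 /\ is_prime_ideal Q2 /\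
        strict_subset Q1 Q2 /\ strict_subset Q2 P).

Definition is_homogeneous_ideal (B : comNzRingType) (G : grading B) (P : B -> Prop) :=
  is_ideal P /\
  forall x (s : seq int) (f : int -> B), P x -> uniq s ->
    (forall i, gcomp G i (f i)) -> x = \sum_(i <- s) f i ->
    forall i, i \in s -> P (f i).

Definition noetherian (B : comNzRingType) : Prop :=
  forall I : nat -> B -> Prop, (forall n, is_ideal (I n)) ->
    (forall n x, I n x -> I n.+1 x) ->
    exists N, forall n, (N <= n)%N -> forall x, I n x -> I N x.

Definition is_gcd_set (D : int -> Prop) (g : nat) : Prop :=
  (forall i, D i -> (Posz g %| i)%Z) /\
  (forall d : int, (forall i, D i -> (d %| i)%Z) -> (d %| Posz g)%Z).

Definition degrees (B : comNzRingType) (G : grading B) (i : int) : Prop :=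
  exists x, gcomp G i x /\ x <> 0.

(* degrees i with (B/P)_i <> 0, for the induced grading (B/P)_i = image of B_i *)
Definition quot_degrees (B : comNzRingType) (G : grading B) (P : B -> Prop)
    (i : int) : Prop :=
  exists x, gcomp G i x /\ ~ P x.

Definition Pi (B : comNzRingType) (G : grading B) (p : nat) : Prop :=
  prime p /\ exists P, is_homogeneous_ideal G P /\ is_height_one_prime P /\
    exists g, is_gcd_set (quot_degrees G P) g /\ (p %| g)%N.

Definition Pistar (B : comNzRingType) (G : grading B) (n : nat) : Prop :=
  (0 < n)%N /\ forall p, Pi G p -> ~ (p %| n)%N.

From HB Require Import structures.
From mathcomp Require Import all_boot all_order all_algebra.
From Stdlib Require Import ClassicalEpsilon.
Set Implicit Arguments. Unset Strict Implicit.
Import Order.TTheory GRing.Theory Num.Theory.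
Local Open Scope ring_scope.

(* (a) If p divides e(B/P) for a homogeneous height-one prime P, then p divides
   every degree i with B_i not contained in P, and by hypothesis some i in S
   is such a degree.
   (b) By the ascending chain condition, the ideal generated by the B_i with
   i <> 0 is already generated by finitely many of them, so (a) applies to a
   finite set S of degrees.
   (c) A prime P containing every B_i with i <> 0 is homogeneous and B/P is
   concentrated in degree 0, so e(B/P) = 0 is divisible by every prime. *)

Section Ideals.

Variable B : comNzRingType.
Implicit Types (I X Y : B -> Prop) (x y : B).

Lemma idealD I x y : is_ideal I -> I x -> I y -> I (x + y).
Proof.
move=> [I0 [IB _]] Ix Iy.
by have := IB _ _ Ix (IB _ _ I0 Iy); rewrite sub0r opprK.
Qed.

Lemma ideal_sum I (T : Type) (s : seq T) (P : pred T) (F : T -> B) :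
  is_ideal I -> (forall t, P t -> I (F t)) -> I (\sum_(t <- s | P t) F t).
Proof.
by move=> HI IF; apply: (big_ind I) => //; [case: HI | move=> x y; apply: idealD].
Qed.

Lemma height_one_prime_ideal (P : B -> Prop) : is_height_one_prime P -> is_ideal P.
Proof. by case=> [[]]. Qed.

Definition ideal_span X x : Prop :=
  forall I, is_ideal I -> (forall y, X y -> I y) -> I x.

Lemma ideal_span_ideal X : is_ideal (ideal_span X).
Proof.
split; [|split].
- by move=> I [].
- by move=> x y Xx Xy I HI XI; case: (HI) => _ [IB _]; apply: IB; [apply: Xx | apply: Xy].
- by move=> a x Xx I HI XI; case: (HI) => _ [_ IM]; apply: IM; apply: Xx.
Qed.

Lemma ideal_span_sub X x : X x -> ideal_span X x.
Proof. by move=> Xx I _; apply. Qed.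

Lemma ideal_span_mono X Y x :
  (forall y, X y -> Y y) -> ideal_span X x -> ideal_span Y x.
Proof. by move=> XY Xx I HI YI; apply: Xx => // y /XY /YI. Qed.

Definition family_span (T : eqType) (A : T -> B -> Prop) (s : seq T) :=
  ideal_span (fun y => exists2 t, t \in s & A t y).

Lemma noetherian_finite_subfamily (T : eqType) (A : T -> B -> Prop) :
  noetherian B -> exists s, forall t x, A t x -> family_span A s x.
Proof.
move=> noethB; apply: NNPP => no_finite.
have fresh s : exists t, exists2 x, A t x & ~ family_span A s x.
  apply: NNPP => all_in; apply: no_finite; exists s => t x Atx.
  by apply: NNPP => nsx; apply: all_in; exists t; exists x.
have [f Hf] := choice _ fresh.
pose D n := iter n (fun s => f s :: s) [::].
have D_mono n x : family_span A (D n) x -> family_span A (D n.+1) x.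
  by apply: ideal_span_mono => y [t tD Aty]; exists t; rewrite // inE tD orbT.
have [N HN] := noethB _ (fun n => ideal_span_ideal _) D_mono.
have [x Ax nx] := Hf (D N); apply: nx; apply: (HN N.+1) => //.
by apply: ideal_span_sub; exists (f (D N)); first exact: mem_head.
Qed.

End Ideals.

Lemma is_gcd_set0 (D : int -> Prop) : (forall i, D i -> i = 0) -> is_gcd_set D 0.
Proof. by move=> D0; split=> [i /D0 ->|d _]; apply: dvdz0. Qed.

Lemma divisors_of_nonzero_finite (s : seq int) :
  exists r : seq nat, forall (p : nat) i, i \in s -> i <> 0 -> (p %| i)%Z -> p \in r.
Proof.
exists (flatten [seq divisors `|i|%N | i <- s]) => p i si /eqP i0 pi.
apply/flattenP; exists (divisors `|i|%N); first exact: map_f.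
by rewrite -dvdn_divisors ?absz_gt0 // -dvdzE.
Qed.

Section Grading.

Variables (B : comNzRingType) (G : grading B).

Lemma Pi_dvd_quot_degrees p :
  Pi G p -> exists P, is_height_one_prime P /\
    forall i, quot_degrees G P i -> (Posz p %| i)%Z.
Proof.
move=> [_ [P [_ [htP [g [[gP _] pg]]]]]]; exists P; split=> // i /gP.
by apply: dvdz_trans; rewrite dvdzE.
Qed.

Lemma Pi_dvd_degree (S : int -> Prop) :
  (forall P, is_height_one_prime P -> ~ (forall i x, S i -> gcomp G i x -> P x)) ->
  forall p, Pi G p -> exists i, S i /\ (Posz p %| i)%Z.
Proof.
move=> S_avoids p /Pi_dvd_quot_degrees [P [htP pP]].
apply: NNPP => no_i; apply: (S_avoids P htP) => i x Si Gx.
apply: NNPP => nPx; apply: no_i; exists i; split=> //.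
by apply: pP; exists x.
Qed.

Section NonzeroDegreesInIdeal.

Variable P : B -> Prop.
Hypotheses (idP : is_ideal P) (PG : forall i x, i <> 0 -> gcomp G i x -> P x).

Lemma homogeneous_of_nonzero_degrees : is_homogeneous_ideal G P.
Proof.
split=> // x s f Px us Gf xE i si.
case: (eqVneq i 0) si => [-> si | /eqP i0 _]; last exact: PG (Gf i).
(* the degree-0 component is x minus the components of nonzero degree *)
have Prest : P (\sum_(j <- s | j != 0) f j).
  by apply: ideal_sum => // j /eqP j0; apply: PG (Gf j).
have [_ [PB _]] := idP.
by move: Px; rewrite xE (bigD1_seq 0 si us) /= => /(PB _ _)/(_ Prest); rewrite addrK.
Qed.

Lemma quot_degrees_eq0 i : quot_degrees G P i -> i = 0.
Proof. by move=> [x [Gx nPx]]; apply: NNPP => i0; apply: nPx (PG i0 Gx). Qed.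

Lemma Pi_of_nonzero_degrees : is_height_one_prime P -> forall p, prime p -> Pi G p.
Proof.
move=> htP p pp; split=> //; exists P; split; first exact: homogeneous_of_nonzero_degrees.
split=> //; exists 0%N; split; last exact: dvdn0.
exact/is_gcd_set0/quot_degrees_eq0.
Qed.

End NonzeroDegreesInIdeal.

Lemma Pistar_eq1 : (forall p, prime p -> Pi G p) -> forall n, Pistar G n <-> n = 1%N.
Proof.
move=> Pi_all n; split=> [[n0 nPi] | ->]; last first.
  by split=> // p [pp _]; rewrite dvdn1 => /eqP p1; rewrite p1 in pp.
apply: NNPP => n1; have n_gt1 : (1 < n)%N by case: n n0 n1 {nPi} => [|[|]].
by apply: (nPi (pdiv n)); [apply/Pi_all/pdiv_prime | apply: pdiv_dvd].
Qed.

End Grading.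

Theorem lemma3p12 (B : idomainType) (G : grading B)
  (He : is_gcd_set (degrees G) 1) :
  (forall S : int -> Prop, (forall i, S i -> i <> 0) ->
     (forall P : B -> Prop, is_height_one_prime P ->
        ~ (forall i x, S i -> gcomp G i x -> P x)) ->
     forall p, Pi G p -> exists i, S i /\ (Posz p %| i)%Z)
  /\
  ((forall P : B -> Prop, is_height_one_prime P ->
        ~ (forall i x, i <> 0 -> gcomp G i x -> P x)) ->
     noetherian B ->
     exists s : seq nat, forall p, Pi G p -> p \in s)
  /\
  ((exists P : B -> Prop, is_height_one_prime P /\
        (forall i x, i <> 0 -> gcomp G i x -> P x)) ->
     (forall p, prime p -> Pi G p) /\ (forall n, Pistar G n <-> n = 1%N)).
Proof.
split; first by move=> S _; apply: Pi_dvd_degree.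
split=> [avoid noethB | [P [htP PG]]].
- pose A i x := i <> 0 /\ gcomp G i x.
  have [s s_span] := noetherian_finite_subfamily A noethB.
  have [r r_div] := divisors_of_nonzero_finite s.
  have s_avoid P : is_height_one_prime P ->
      ~ (forall i x, i \in s /\ i <> 0 -> gcomp G i x -> P x).
    move=> htP Ps; apply: (avoid P htP) => i x i0 Gx.
    apply: (s_span i x (conj i0 Gx)); first exact: height_one_prime_ideal.
    by move=> y [t ts [t0 Gy]]; apply: Ps Gy.
  exists r => p /(Pi_dvd_degree s_avoid) [i [[si i0] pi]].
  exact: r_div si i0 pi.
- have Pi_all := Pi_of_nonzero_degrees (height_one_prime_ideal htP) PG htP.
  by split=> //; apply: Pistar_eq1.
Qed.
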